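(* Consider the miners' game with $n\ge2$ miners, parameters $R>0$, $N>0$, unit prices $\lambda_1,\dots,\lambda_n>0$, where miner $s_i$ chooses $\mu_i\ge0$ and receives profit $P_i=\frac{\mu_i}{\sum_{j=1}^n\mu_j}RN-\lambda_i\mu_i$ (the fraction being $0$ if $\sum_j\mu_j=0$). Relabel the miners so that $\lambda_1\le\lambda_2\le\dots\le\lambda_n$. Define $q$ as follows: start with $S'=\{s_1,s_2\}$ and $q=2$; while $q<n$ and $\lambda_{q+1}<\frac{\sum_{s_i\in S'}\lambda_i}{|S'|-1}$, add $s_{q+1}$ to $S'$ and increase $q$ by $1$. Let $\Lambda=\sum_{i=1}^q\lambda_i$ and define $$\mu_i^*=\frac{RN(q-1)}{\Lambda}\left(1-\frac{(q-1)\lambda_i}{\Lambda}\right)\ \text{for } i\le q,\qquad \mu_i^*=0\ \text{for } i>q.$$ Then $(\mu_1^*,\dots,\mu_n^* )$ is a Nash equilibrium of the miners' game.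
   Context: A Nash equilibrium is a profile $(\mu_1^*,\dots,\mu_n^* )$ with all $\mu_i^*\ge 0$ such that no miner $s_i$ can strictly increase $P_i$ by unilaterally changing $\mu_i^*$ to another value $\mu_i\ge0$. *)

From mathcomp Require Import all_boot all_order all_algebra.
Set Implicit Arguments. Unset Strict Implicit. Unset Printing Implicit Defensive.
Import Order.TTheory GRing.Theory Num.Theory.
Local Open Scope ring_scope.

(* Miners are indexed 0 .. n-1 (miner s_{i+1} has index i).
   Rw is the paper's parameter R, N the paper's N, lam i the unit price. *)
Section Game.
Variable (R : realFieldType) (n : nat) (Rw N : R) (lam : nat -> R).

Definition total (mu : nat -> R) : R := \sum_(j < n) mu j.

Definition profit (mu : nat -> R) (i : nat) : R :=
  (if total mu == 0 then 0 else mu i / total mu) * (Rw * N) - lam i * mu i.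

Definition deviate (mu : nat -> R) (i : nat) (m : R) : nat -> R :=
  fun j => if j == i then m else mu j.

Definition nash_equilibrium (mu : nat -> R) : Prop :=
  (forall i, (i < n)%N -> 0 <= mu i) /\
  (forall i (m : R), (i < n)%N -> 0 <= m ->
     ~ (profit (deviate mu i m) i > profit mu i)).

(* The fuel n suffices since q increases strictly and stays <= n. *)
Fixpoint qloop (fuel q : nat) : nat :=
  match fuel with
  | 0 => q
  | f.+1 =>
      if (q < n)%N && (lam q < (\sum_(i < q) lam i) / (q - 1)%:R)
      then qloop f q.+1 else q
  end.

Definition q_star : nat := qloop n 2.

Definition Lambda : R := \sum_(i < q_star) lam i.

Definition mu_star (i : nat) : R :=
  if (i < q_star)%N then
    Rw * N * (q_star - 1)%:R / Lambda * (1 - (q_star - 1)%:R * lam i / Lambda)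
  else 0.

End Game.

From Pilot Require Import Defs.
From mathcomp Require Import all_boot all_order all_algebra.
From mathcomp Require Import ring lra.
Import Order.TTheory GRing.Theory Num.Theory.
Local Open Scope ring_scope.

(* Against opponents of total power S > 0, miner i's profit as a function of
   its own power m is the concave function m / (m + S) * RN - lam_i * m.  The
   loop keeps every selected price below Lambda / (q - 1), so each selected
   miner gets positive power and, since the total equals RN (q - 1) / Lambda,
   sits exactly at the stationary point of its profit.  When the loop stops,
   every excluded miner has lam_i >= Lambda / (q - 1), so the price already
   exceeds the marginal reward at m = 0 and its best response is 0. *)

Definition payoff {R : realFieldType} (c l S m : R) : R := m / (m + S) * c - l * m.

Section BestResponse.
Variables (R : realFieldType) (c l S : R).
Hypotheses (S_gt0 : 0 < S) (l_ge0 : 0 <= l).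

Lemma payoff_le_stationary (mu m : R) : 0 <= mu -> 0 <= m ->
  (mu + S) ^+ 2 * l = c * S -> payoff c l S m <= payoff c l S mu.
Proof.
move=> mu_ge0 m_ge0 stationary.
have mS_gt0 : 0 < m + S by rewrite ltr_wpDl.
have muS_gt0 : 0 < mu + S by rewrite ltr_wpDl.
have -> : c = (mu + S) ^+ 2 * l / S by rewrite stationary mulfK ?gt_eqF.
rewrite -subr_ge0.
have -> : payoff ((mu + S) ^+ 2 * l / S) l S mu - payoff ((mu + S) ^+ 2 * l / S) l S m
    = l * (mu - m) ^+ 2 / (m + S).
  by rewrite /payoff; field; rewrite !gt_eqF.
by apply: divr_ge0; [rewrite mulr_ge0 ?sqr_ge0 | exact: ltW].
Qed.

Lemma payoff_le_at0 (m : R) : 0 <= m -> c <= l * S -> payoff c l S m <= payoff c l S 0.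
Proof.
move=> m_ge0 c_le.
have mS_gt0 : 0 < m + S by rewrite ltr_wpDl.
have -> : payoff c l S m = m * (c - l * (m + S)) / (m + S).
  by rewrite /payoff; field; rewrite gt_eqF.
rewrite /payoff mul0r mul0r mulr0 subrr pmulr_lle0 ?invr_gt0 //.
by rewrite mulr_ge0_le0 // subr_le0 (le_trans c_le) // ler_wpM2l // lerDr.
Qed.

End BestResponse.

Section Game.
Variables (R : realFieldType) (n : nat) (Rw N : R) (lam : nat -> R).

Lemma total_deviate (mu : nat -> R) i m : (i < n)%N ->
  Defs.total n (deviate mu i m) = m + (Defs.total n mu - mu i).
Proof.
move=> ilt; rewrite /Defs.total (bigD1 (Ordinal ilt)) // [in RHS](bigD1 (Ordinal ilt)) //=.
rewrite /deviate eqxx (eq_bigr (fun j : 'I_n => mu j)); first by ring.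
by move=> j /negPf j_ne; rewrite -val_eqE /= in j_ne; rewrite j_ne.
Qed.

Lemma profit_deviate (mu : nat -> R) i m : (i < n)%N ->
  0 < Defs.total n mu - mu i -> 0 <= m ->
  profit n Rw N lam (deviate mu i m) i = payoff (Rw * N) (lam i) (Defs.total n mu - mu i) m.
Proof.
move=> ilt S_gt0 m_ge0; have mS_gt0 := ltr_wpDl m_ge0 S_gt0.
by rewrite /profit total_deviate // gt_eqF // /deviate eqxx.
Qed.

Lemma profit_payoff (mu : nat -> R) i :
  0 < Defs.total n mu - mu i -> 0 <= mu i ->
  profit n Rw N lam mu i = payoff (Rw * N) (lam i) (Defs.total n mu - mu i) (mu i).
Proof.
move=> S_gt0 mu_ge0; have total_split : Defs.total n mu = mu i + (Defs.total n mu - mu i).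
  by rewrite addrC subrK.
by rewrite /profit /payoff -total_split gt_eqF // total_split ltr_wpDl.
Qed.

Lemma best_responses_nash_equilibrium (mu : nat -> R) :
  (forall i, (i < n)%N ->
     [/\ 0 <= mu i, 0 < Defs.total n mu - mu i &
         forall m, 0 <= m -> payoff (Rw * N) (lam i) (Defs.total n mu - mu i) m
                              <= payoff (Rw * N) (lam i) (Defs.total n mu - mu i) (mu i)]) ->
  nash_equilibrium n Rw N lam mu.
Proof.
move=> best; split=> [i /best[] // | i m ilt m_ge0].
have [mu_ge0 S_gt0 le_payoff] := best i ilt.
by apply/negP; rewrite -leNgt profit_deviate // profit_payoff // le_payoff.
Qed.

End Game.

Section Selection.
Variables (R : realFieldType) (n : nat) (lam : nat -> R).
Hypothesis lam_gt0 : forall i, (i < n)%N -> 0 < lam i.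
Hypothesis lam_mono : forall i j, (i <= j)%N -> (j < n)%N -> lam i <= lam j.

Definition below_threshold (q : nat) : Prop :=
  forall i, (i < q)%N -> (q - 1)%:R * lam i < \sum_(j < q) lam j.

Lemma below_threshold2 : (2 <= n)%N -> below_threshold 2.
Proof.
move=> n2 i i_lt2; rewrite !big_ord_recr big_ord0 /= add0r mul1r.
have lam0_gt0 : 0 < lam 0 by apply: lam_gt0; exact: leq_trans n2.
have lam1_gt0 : 0 < lam 1 by apply: lam_gt0.
by case: i i_lt2 => [|[|]] //= _; lra.
Qed.

Lemma below_threshold_step q : (2 <= q)%N -> (q < n)%N ->
  lam q < (\sum_(i < q) lam i) / (q - 1)%:R -> below_threshold q.+1.
Proof.
move=> q_ge2 q_lt lam_q_lt i i_le_q.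
have q1_gt0 : 0 < (q - 1)%:R :> R by rewrite ltr0n subn_gt0.
rewrite ltr_pdivlMr // in lam_q_lt.
rewrite big_ord_recr /= subSS subn0.
have -> : q%:R = (q - 1)%:R + 1 :> R.
  by rewrite natr1 subn1 prednK // (leq_trans _ q_ge2).
have lam_i_le : lam i <= lam q by apply: lam_mono.
have : (q - 1)%:R * lam i <= (q - 1)%:R * lam q by rewrite ler_wpM2l // ltW.
nra.
Qed.

Lemma qloop_spec f q : (2 <= q)%N -> (q <= n)%N -> below_threshold q ->
  (n <= f + q)%N ->
  [/\ (2 <= qloop n lam f q)%N, (qloop n lam f q <= n)%N,
      below_threshold (qloop n lam f q) &
      ((qloop n lam f q < n)%N ->
         (\sum_(i < qloop n lam f q) lam i) / (qloop n lam f q - 1)%:R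
           <= lam (qloop n lam f q))].
Proof.
elim: f q => [|f IH] q q_ge2 q_le below fuel /=.
  by split=> //; rewrite ltnNge fuel.
case: ifP => [/andP[q_lt lam_q_lt] | stop].
  apply: IH => //; [exact: leqW | exact: below_threshold_step | by rewrite -addSnnS].
by split=> // q_lt; move: stop; rewrite q_lt /= => /negbT; rewrite -leNgt.
Qed.

Local Notation q := (q_star n lam).
Local Notation Lam := (Lambda n lam).

Lemma q_star_spec : (2 <= n)%N ->
  [/\ (2 <= q)%N, (q <= n)%N, below_threshold q &
      forall i, (q <= i)%N -> (i < n)%N -> Lam <= (q - 1)%:R * lam i].
Proof.
move=> n2.
have [q_ge2 q_le below stop] :=
  qloop_spec n 2 (leqnn 2) n2 (below_threshold2 n2) (leq_addr 2 n).
split=> // i q_le_i i_lt.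
have q1_gt0 : 0 < (q - 1)%:R :> R by rewrite ltr0n subn_gt0.
have := stop (leq_ltn_trans q_le_i i_lt); rewrite ler_pdivrMr // mulrC => Lam_le.
by apply: (le_trans Lam_le); rewrite ler_wpM2l ?(ltW q1_gt0) // lam_mono.
Qed.

Lemma Lambda_gt0 : (2 <= n)%N -> 0 < Lam.
Proof.
move=> n2; have [q_ge2 q_le below _] := q_star_spec n2.
apply: le_lt_trans (below 0%N (ltnW q_ge2)).
by rewrite mulr_ge0 // ltW // lam_gt0 // (leq_trans _ n2).
Qed.

Section Equilibrium.
Variables (Rw N : R).
Hypotheses (n_ge2 : (2 <= n)%N) (RN_gt0 : 0 < Rw * N).

Local Notation T := (Rw * N * (q - 1)%:R / Lam).
Local Notation mu := (mu_star n Rw N lam).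

Lemma q_star_sub1_gt0 : 0 < (q - 1)%:R :> R.
Proof. by have [q_ge2 _ _ _] := q_star_spec n_ge2; rewrite ltr0n subn_gt0. Qed.

Lemma total_mu_star_gt0 : 0 < T.
Proof. by apply: divr_gt0; [rewrite mulr_gt0 ?q_star_sub1_gt0 | exact: Lambda_gt0]. Qed.

Lemma total_mu_star : Defs.total n mu = T.
Proof.
have [q_ge2 q_le _ _] := q_star_spec n_ge2.
rewrite /Defs.total -(big_mkord xpredT) (big_cat_nat (leq0n q) q_le) /=.
rewrite [X in _ + X]big1_seq ?addr0; last first.
  by move=> i /andP[_]; rewrite mem_index_iota /mu_star => /andP[/leq_gtF ->].
rewrite big_mkord; under eq_bigr => i _ do rewrite /mu_star ltn_ord.
rewrite -mulr_sumr sumrB sumr_const card_ord -mulr_suml -mulr_sumr.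
have -> : 1 *+ q = (q - 1)%:R + 1 :> R.
  by rewrite natr1 subn1 prednK // (leq_trans _ q_ge2).
by rewrite /Lambda; field; rewrite gt_eqF ?Lambda_gt0.
Qed.

Lemma mu_star_selected_best_response i : (i < q)%N ->
  [/\ 0 <= mu i, 0 < T - mu i &
      forall m, 0 <= m -> payoff (Rw * N) (lam i) (T - mu i) m
                           <= payoff (Rw * N) (lam i) (T - mu i) (mu i)].
Proof.
move=> i_lt; have [_ q_le below _] := q_star_spec n_ge2.
have Lam_gt0 := Lambda_gt0 n_ge2.
have lam_i_gt0 : 0 < lam i by apply: lam_gt0; exact: leq_trans q_le.
have others : T - mu i = T * ((q - 1)%:R * lam i / Lam).
  by rewrite /mu_star i_lt; ring.
have mu_i_gt0 : 0 < mu i.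
  rewrite /mu_star i_lt mulr_gt0 ?total_mu_star_gt0 // subr_gt0.
  by rewrite ltr_pdivrMr // mul1r below.
have others_gt0 : 0 < T - mu i.
  by rewrite others mulr_gt0 ?total_mu_star_gt0 ?divr_gt0 ?mulr_gt0 ?q_star_sub1_gt0.
split=> [|//|m m_ge0]; first exact: ltW.
apply: payoff_le_stationary => //; try exact: ltW.
by rewrite addrC subrK others; field; rewrite gt_eqF.
Qed.

Lemma mu_star_excluded_best_response i : (q <= i)%N -> (i < n)%N ->
  [/\ 0 <= mu i, 0 < T - mu i &
      forall m, 0 <= m -> payoff (Rw * N) (lam i) (T - mu i) m
                           <= payoff (Rw * N) (lam i) (T - mu i) (mu i)].
Proof.
move=> q_le_i i_lt; have [_ _ _ stop] := q_star_spec n_ge2.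
have Lam_gt0 := Lambda_gt0 n_ge2.
have -> : mu i = 0 by rewrite /mu_star ltnNge q_le_i.
rewrite subr0; split=> [//||m m_ge0]; first exact: total_mu_star_gt0.
apply: payoff_le_at0 => //; [exact: total_mu_star_gt0 | exact/ltW/lam_gt0 |].
rewrite -subr_ge0.
have -> : lam i * T - Rw * N = Rw * N * ((q - 1)%:R * lam i - Lam) / Lam.
  by field; rewrite gt_eqF.
apply: divr_ge0; last exact: ltW.
by apply: mulr_ge0; [exact: ltW | rewrite subr_ge0 stop].
Qed.

End Equilibrium.
End Selection.

Theorem theorem2 (R : realFieldType) (n : nat) (Rw N : R) (lam : nat -> R) :
  (2 <= n)%N -> 0 < Rw -> 0 < N ->
  (forall i, (i < n)%N -> 0 < lam i) ->
  (forall i j, (i <= j)%N -> (j < n)%N -> lam i <= lam j) ->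
  nash_equilibrium n Rw N lam (mu_star n Rw N lam).
Proof.
move=> n_ge2 Rw_gt0 N_gt0 lam_gt0 lam_mono.
have RN_gt0 : 0 < Rw * N by rewrite mulr_gt0.
apply: best_responses_nash_equilibrium => i i_lt.
rewrite total_mu_star //.
have [i_lt_q | q_le_i] := ltnP i (q_star n lam).
- exact: mu_star_selected_best_response.
- exact: mu_star_excluded_best_response.
Qed.
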